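(* Fix $x\in\mathbb{R}^d$ and let $L=\lceil 640\,d\ln k\rceil$. Then for every step $t$ with $D_t>0$, $$\Pr\big\{D_{t+L}\ge D_t/2\mid\mathcal{T}_t\big\}\le\frac1{k^3}.$$
   Context: Centers $C=\{c^1,\dots,c^k\}\subset\mathbb{R}^d$, $\delta\in(0,1)$, $\varepsilon=\min\{\delta/(15\ln k),1/320\}$. A median of a finite nonempty $S\subset\mathbb{R}^d$ is a point $m$ such that for every coordinate $i$ each of $\{c\in S:c_i<m_i\}$, $\{c\in S:c_i>m_i\}$ has at most $|S|/2$ elements. Algorithm: $\mathcal{T}_1$ is a root (cell $\mathbb{R}^d$) with assigned centers $C$. For $t=1,2,\dots$, while some leaf has at least two assigned centers: sample independently $i_t$ uniform in $\{1,\dots,d\}$, $\theta_t$ uniform in $(0,1)$, $\sigma_t$ uniform in $\{\pm1\}$; to every leaf $u$ of $\mathcal{T}_t$ with $|C_u|\ge2$ apply Divide-and-Share with $(i,\theta,\sigma)=(i_t,\theta_t,\sigma_t)$, giving $\mathcal{T}_{t+1}$. Divide-and-Share on node $u$: $m^u$ a median of $C_u$, $R_u=\max_{c\in C_u}\|c-m^u\|_2$, $Left=\{c\in C_u:c_i\le m^u_i+(\sigma+\varepsilon)\sqrt\theta R_u\}$, $Right=\{c\in C_u:c_i\ge m^u_i+(\sigma-\varepsilon)\sqrt\theta R_u\}$; if both nonempty, $u$ is split into children $\{y\in u: y_i\le m^u_i+\sigma\sqrt\theta R_u\}$ with centers $Left$ and $\{y\in u: y_i> m^u_i+\sigma\sqrt\theta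 R_u\}$ with centers $Right$; otherwise $u$ is unchanged. For the fixed $x$, $u_t$ is the leaf of $\mathcal{T}_t$ containing $x$, $C_t=C_{u_t}$, $D_t=\max\{\|a-b\|_2:a,b\in C_t\}$. If the algorithm has stopped before step $s$, $\mathcal{T}_s$ denotes the final tree. *)

From HB Require Import structures.
From mathcomp Require Import all_boot all_order all_algebra.
From mathcomp Require Import all_classical all_reals all_analysis.
Set Implicit Arguments. Unset Strict Implicit. Unset Printing Implicit Defensive.
Import Order.TTheory GRing.Theory Num.Theory.
Import numFieldNormedType.Exports.
Local Open Scope ring_scope.

Section Algo.
Variables (R : realType) (d : nat).

Definition Rpoint := 'rV[R]_d.
Definition coord (p : Rpoint) (i : 'I_d) : R := p ord0 i.

Definition enorm (p : Rpoint) : R := Num.sqrt (\sum_(i < d) coord p i ^+ 2).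

Definition is_median (S : seq Rpoint) (m : Rpoint) : Prop :=
  forall i : 'I_d,
    (count (fun c => coord c i < coord m i) S)%:R <= (size S)%:R / 2 :> R /\
    (count (fun c => coord c i > coord m i) S)%:R <= (size S)%:R / 2 :> R.

(* a leaf: its cell (a subset of R^d) and its assigned centers *)
Definition leaf := (pred Rpoint * seq Rpoint)%type.
Definition tree := seq leaf.

(* one random ds_draw (i, theta, sigma); sigma = +1 iff the boolean is true *)
Definition ds_draw := ('I_d * R * bool)%type.
Definition sgn (b : bool) : R := if b then 1 else -1.

Variables (med : seq Rpoint -> Rpoint) (eps : R).

Definition cradius (S : seq Rpoint) (m : Rpoint) : R :=
  \big[Num.max/0]_(c <- S) enorm (c - m).

Definition cdiam (S : seq Rpoint) : R :=
  \big[Num.max/0]_(a <- S) \big[Num.max/0]_(b <- S) enorm (a - b).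

Definition divide_share (w : ds_draw) (u : leaf) : seq leaf :=
  let: (i, theta, s) := w in
  let: (cell, Cu) := u in
  if (size Cu >= 2)%N then
    let m := med Cu in
    let Ru := cradius Cu m in
    let Left := [seq c <- Cu | coord c i <= coord m i + (sgn s + eps) * Num.sqrt theta * Ru] in
    let Right := [seq c <- Cu | coord c i >= coord m i + (sgn s - eps) * Num.sqrt theta * Ru] in
    let thr := coord m i + sgn s * Num.sqrt theta * Ru in
    if (Left != [::]) && (Right != [::]) then
      [:: ((fun y => cell y && (coord y i <= thr)), Left);
          ((fun y => cell y && (coord y i > thr)), Right)]
    else [:: u]
  else [:: u].

Definition ds_step (w : ds_draw) (T : tree) : tree := flatten (map (divide_share w) T).

Definition tree_after (C : seq Rpoint) (h : seq ds_draw) : tree :=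
  foldl (fun T w => ds_step w T) [:: ((fun _ => true) : pred Rpoint, C)] h.

Definition leaf_centers (x : Rpoint) (T : tree) : seq Rpoint :=
  (nth ((fun _ => true) : pred Rpoint, [::]) T (find (fun u : leaf => u.1 x) T)).2.

Local Open Scope ereal_scope.
(* Probability that event E holds on the tree obtained from T after n further
   independent draws (i uniform in 'I_d, theta uniform in (0,1), sigma uniform
   in {+1,-1}); defined as the iterated expectation. *)
Fixpoint prob_after (n : nat) (E : tree -> bool) (T : tree) : \bar R :=
  match n with
  | 0 => (if E T then 1 else 0)
  | n'.+1 =>
      ((2 * d%:R)^-1)%:E *
      (\sum_(i < d) \sum_(s : bool)
         \int[@lebesgue_measure R]_(theta in `]0%R, 1%R[%classic)
            prob_after n' E (ds_step (i, theta, s) T))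
  end.
End Algo.

From Pilot Require Import Defs.
From HB Require Import structures.
From mathcomp Require Import all_boot all_order all_algebra.
From mathcomp Require Import all_classical all_reals all_analysis.
From mathcomp Require Import measurable_realfun ring lra.
Import Order.TTheory GRing.Theory Num.Theory.
Local Open Scope ring_scope.
Set Implicit Arguments. Unset Strict Implicit. Unset Printing Implicit Defensive.

(* Call two centres of the cell of x at time t far if their distance is at
   least D_t / 2; the event D_(t+L) >= D_t / 2 forces some far pair to stay in
   the cell of x for L more steps.  For a far pair (a, b) and a cut direction
   (i, sigma), the cut separates a and b whenever theta falls in an explicit
   window determined by the offsets of a_i and b_i from the median.  As
   R_u^2 <= 2 D_t^2 for a median, the window lengths summed over the 2d
   directions are at least 1/40.  Hence every step multiplies the expected
   number of surviving far pairs by at most 1 - 1/(80 d), and after L steps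
   this expectation is at most k^2 (1 - 1/(80 d))^L <= k^2 k^-8 <= k^-3. *)

Section SeqBounds.
Variables (R : realDomainType) (T : eqType).

Lemma bigmax_seq_geP (F : T -> R) (s : seq T) y :
  0 < y -> y <= \big[Num.max/0]_(a <- s) F a -> exists2 a, a \in s & y <= F a.
Proof.
move=> y_gt0 le_y; apply/hasP; apply: contraTT le_y => /hasPn Fs.
rewrite -ltNge big_seq; apply: bigmax_lt => // a /Fs; by rewrite -ltNge.
Qed.

Lemma sum_ge_half_count (s : seq T) (p : pred T) (f : T -> R) (v : R) :
  (size s)%:R <= 2 * (count p s)%:R :> R -> 0 <= v -> (forall c, 0 <= f c) ->
  (forall c, p c -> v <= f c) -> v * (size s)%:R <= 2 * \sum_(c <- s) f c.
Proof.
move=> half v_ge0 f_ge0 pf.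
have : \sum_(c <- s | p c) v <= \sum_(c <- s) f c.
  by rewrite big_mkcond; apply: ler_sum => c _; case: ifP => // /pf.
rewrite big_const_seq iter_addr_0 -mulr_natr => le_sum.
have := ler_wpM2l v_ge0 half; lra.
Qed.

Lemma mem2_size_gt1 (s : seq T) a b : a \in s -> b \in s -> a != b -> (1 < size s)%N.
Proof.
case: s => [|c [|c' s']] //; rewrite !mem_seq1 => /eqP-> /eqP->; by rewrite eqxx.
Qed.

End SeqBounds.

Section Geometry.
Variables (R : realType) (d : nat).
Local Notation point := (Rpoint R d).
Local Notation coord := (@Defs.coord R d).

Definition sqnorm (p : point) : R := \sum_(i < d) coord p i ^+ 2.

Lemma sqnorm_ge0 p : 0 <= sqnorm p.
Proof. by apply: sumr_ge0 => i _; rewrite sqr_ge0. Qed.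

Lemma enorm_ge0 (p : point) : 0 <= enorm p.
Proof. exact: sqrtr_ge0. Qed.

Lemma sqr_enorm (p : point) : enorm p ^+ 2 = sqnorm p.
Proof. by rewrite sqr_sqrtr // sqnorm_ge0. Qed.

Lemma enorm0 : enorm (0 : point) = 0.
Proof. by rewrite /enorm big1 ?sqrtr0 // => i _; rewrite /Defs.coord mxE expr0n. Qed.

Lemma coordB (a b : point) i : coord (a - b) i = coord a i - coord b i.
Proof. by rewrite /Defs.coord !mxE. Qed.

Lemma sqnormB (a b : point) : sqnorm (a - b) = \sum_(i < d) (coord a i - coord b i) ^+ 2.
Proof. by apply: eq_bigr => i _; rewrite coordB. Qed.

Lemma sqr_coord_le (p : point) i : coord p i ^+ 2 <= sqnorm p.
Proof. by rewrite /sqnorm (bigD1 i) //= lerDl; apply: sumr_ge0 => j _; rewrite sqr_ge0. Qed.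

Lemma sqnorm_triangle (a b m : point) : sqnorm (a - b) <= 2 * (sqnorm (a - m) + sqnorm (b - m)).
Proof.
rewrite !sqnormB -big_split mulr_sumr; apply: ler_sum => i _ /=.
have := sqr_ge0 (coord a i + coord b i - 2 * coord m i); nra.
Qed.

Lemma cdiam_ge0 (S : seq point) : 0 <= cdiam S.
Proof. exact: bigmax_ge_id. Qed.

Lemma le_cdiam (S : seq point) a b : a \in S -> b \in S -> enorm (a - b) <= cdiam S.
Proof.
move=> aS bS; apply: le_trans (le_bigmax_seq 0 b _ (fun b => enorm (a - b)) bS isT) _.
exact: (le_bigmax_seq 0 a _ (fun a => \big[Num.max/0]_(b <- S) enorm (a - b)) aS isT).
Qed.

Lemma cdiam_subset (S S' : seq point) : {subset S <= S'} -> cdiam S <= cdiam S'.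
Proof.
move=> sub; rewrite /cdiam big_seq; apply: bigmax_le => [|a aS]; first exact: cdiam_ge0.
rewrite big_seq; apply: bigmax_le => [|b bS]; first exact: cdiam_ge0.
by apply: le_cdiam; apply: sub.
Qed.

Lemma cdiam_geP (S : seq point) y : 0 < y -> y <= cdiam S ->
  exists a b, [/\ a \in S, b \in S & y <= enorm (a - b)].
Proof.
move=> y_gt0 /(bigmax_seq_geP y_gt0) [a aS] /(bigmax_seq_geP y_gt0) [b bS le_y].
by exists a, b.
Qed.

Lemma cradius_ge0 (S : seq point) m : 0 <= cradius S m.
Proof. exact: bigmax_ge_id. Qed.

Lemma le_cradius (S : seq point) m c : c \in S -> enorm (c - m) <= cradius S m.
Proof. by move=> cS; apply: (le_bigmax_seq 0 c _ (fun c => enorm (c - m)) cS). Qed.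

Lemma median_coord_sqr (S : seq point) m c i : is_median S m -> c \in S ->
  (coord c i - coord m i) ^+ 2 * (size S)%:R
    <= 2 * \sum_(c' <- S) (coord c i - coord c' i) ^+ 2.
Proof.
move=> /(_ i) [lt_half gt_half] cS.
(* At least half of S lies weakly beyond m on the side opposite to c, and each
   such c' is at least as far from c as m is. *)
have other_half (q : pred point) : (count q S)%:R <= (size S)%:R / 2 :> R ->
    (size S)%:R <= 2 * (count (predC q) S)%:R :> R.
  by have := count_predC q S; move/(congr1 (fun n => n%:R : R)); rewrite natrD; lra.
case: (leP (coord m i) (coord c i)) => [le_mc|lt_cm].
- apply: (sum_ge_half_count (other_half _ gt_half)) => [|c'|c'] /=; rewrite ?sqr_ge0 //.
  by rewrite -leNgt => le_c'm; nra.
- apply: (sum_ge_half_count (other_half _ lt_half)) => [|c'|c'] /=; rewrite ?sqr_ge0 //.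
  by rewrite -leNgt => le_mc'; nra.
Qed.

Lemma median_sqnorm (S : seq point) m c : is_median S m -> c \in S ->
  sqnorm (c - m) <= 2 * cdiam S ^+ 2.
Proof.
move=> medS cS.
have size_gt0 : 0 < (size S)%:R :> R by rewrite ltr0n; case: S medS cS.
have to_pairs : sqnorm (c - m) * (size S)%:R <= 2 * \sum_(c' <- S) sqnorm (c - c').
  rewrite sqnormB mulr_suml.
  apply: le_trans (ler_sum _ (fun i _ => median_coord_sqr i medS cS)) _.
  by rewrite -mulr_sumr exchange_big /=; under [X in _ <= 2 * X]eq_bigr do rewrite sqnormB.
have pairs_le : \sum_(c' <- S) sqnorm (c - c') <= (size S)%:R * cdiam S ^+ 2.
  have -> : (size S)%:R * cdiam S ^+ 2 = \sum_(c' <- S) cdiam S ^+ 2.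
    by rewrite big_const_seq count_predT iter_addr_0 mulr_natl.
  rewrite big_seq [X in _ <= X]big_seq; apply: ler_sum => c' c'S.
  rewrite -sqr_enorm; have := le_cdiam cS c'S; have := enorm_ge0 (c - c'); nra.
have := cdiam_ge0 S; have := sqnorm_ge0 (c - m).
rewrite -(ler_pM2r size_gt0); nra.
Qed.

Lemma cradius_median_sqr (S : seq point) m : is_median S m ->
  cradius S m ^+ 2 <= 2 * cdiam S ^+ 2.
Proof.
move=> medS; have := cradius_ge0 S m; rewrite le_eqVlt => /predU1P[<-|r_gt0].
  by rewrite expr0n mulr_ge0 ?sqr_ge0.
have [c cS le_r] := bigmax_seq_geP r_gt0 (lexx _).
have := median_sqnorm medS cS; rewrite -sqr_enorm; nra.
Qed.

End Geometry.

Section Tree.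
Variables (R : realType) (d : nat) (med : seq (Rpoint R d) -> Rpoint R d) (eps : R).
Local Notation point := (Rpoint R d).
Local Notation coord := (@Defs.coord R d).

Definition split_centers (x : point) (w : ds_draw R d) (C : seq point) : seq point :=
  let: (i, theta, s) := w in
  if (size C >= 2)%N then
    let m := med C in
    let Ru := cradius C m in
    let Left := [seq c <- C | coord c i <= coord m i + (sgn R s + eps) * Num.sqrt theta * Ru] in
    let Right := [seq c <- C | coord c i >= coord m i + (sgn R s - eps) * Num.sqrt theta * Ru] in
    if (Left != [::]) && (Right != [::]) then
      if coord x i <= coord m i + sgn R s * Num.sqrt theta * Ru then Left else Right
    else C
  else C.

Lemma split_centers_subset x w C : {subset split_centers x w C <= C}.
Proof.
case: w => [[i th] s] /= c; case: ifP => // _.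
by case: ifP => // _; case: ifP => _; rewrite mem_filter => /andP[].
Qed.

Lemma leaf_centers_cons x (u : leaf R d) T :
  leaf_centers x (u :: T) = if u.1 x then u.2 else leaf_centers x T.
Proof. by rewrite /leaf_centers /=; case: ifP. Qed.

Lemma leaf_centers_cat x (T1 T2 : tree R d) :
  leaf_centers x (T1 ++ T2) =
  if has (fun u : leaf R d => u.1 x) T1 then leaf_centers x T1 else leaf_centers x T2.
Proof. by elim: T1 => [|u T1 IH] //=; rewrite !leaf_centers_cons; case: ifP. Qed.

Lemma leaf_centers_ds_step x w T :
  leaf_centers x (ds_step med eps w T) = split_centers x w (leaf_centers x T).
Proof.
case: w => [[i th] s]; elim: T => [|[cell Cu] T IH] //.
rewrite /ds_step /= leaf_centers_cat -/(ds_step med eps (i, th, s) T) IH leaf_centers_cons /=.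
rewrite /divide_share; case cell_x: (cell x) => /=.
- case: (2 <= size Cu)%N => /=; last by rewrite cell_x leaf_centers_cons /= cell_x.
  case: (_ && _) => /=; last by rewrite cell_x leaf_centers_cons /= cell_x.
  rewrite cell_x /=; case thr_x: (coord x i <= _); rewrite leaf_centers_cons /= cell_x thr_x //=.
  by rewrite leaf_centers_cons /= cell_x ltNge thr_x.
- by case: (2 <= size Cu)%N => /=; [case: (_ && _) => /=|]; rewrite cell_x.
Qed.

Definition leaves_within (C : seq point) (T : tree R d) :=
  all (fun u : leaf R d => subseq u.2 C) T.

Lemma leaves_within_ds_step C w T :
  leaves_within C T -> leaves_within C (ds_step med eps w T).
Proof.
elim: T => [|[cell Cu] T IH] //= /andP[/= CuC /IH TC].
rewrite /leaves_within /ds_step /= all_cat -/(ds_step med eps w T).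
rewrite -/(leaves_within C (ds_step med eps w T)) TC andbT {IH TC}; case: w => [[i th] s].
rewrite /divide_share; case: ifP => _ /=; last by rewrite CuC.
case: ifP => _ /=; last by rewrite CuC.
by rewrite !(subseq_trans (filter_subseq _ _) CuC).
Qed.

Lemma leaf_centers_tree_after x C h : subseq (leaf_centers x (tree_after med eps C h)) C.
Proof.
have : leaves_within C [:: ((fun _ => true) : pred point, C)] by rewrite /= subseq_refl.
rewrite /tree_after; elim: h [:: _] => [|w h IH] T /= TC; last first.
  by apply: IH; apply: leaves_within_ds_step.
rewrite /leaf_centers; case: (ltnP (find (fun u : leaf R d => u.1 x) T) (size T)) => lt_T.
  exact: (allP TC _ (mem_nth _ lt_T)).
by rewrite nth_default // sub0seq.
Qed.

End Tree.

Section CutTimes.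
Variable R : rcfType.

Definition cut_time (r c y : R) : R := (Num.max y 0 / (c * r)) ^+ 2.

Lemma cut_time_ge0 r c y : 0 <= cut_time r c y.
Proof. exact: sqr_ge0. Qed.

Lemma cut_time_lt r c y th : 0 < c * r -> 0 <= th ->
  (cut_time r c y < th) = (Num.max y 0 < c * Num.sqrt th * r).
Proof.
move=> cr_gt0 th_ge0; rewrite -[th in LHS]sqr_sqrtr // ltr_pXn2r ?nnegrE ?sqrtr_ge0 //.
  by rewrite ltr_pdivrMr // [X in _ < X]mulrCA mulrA.
by rewrite divr_ge0 ?le_max ?lexx ?orbT // ltW.
Qed.

Lemma lt_cut_time r c y th : 0 < c * r -> 0 <= th ->
  (th < cut_time r c y) = (c * Num.sqrt th * r < Num.max y 0).
Proof.
move=> cr_gt0 th_ge0; rewrite -[th in LHS]sqr_sqrtr // ltr_pXn2r ?nnegrE ?sqrtr_ge0 //.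
  by rewrite ltr_pdivlMr // [X in X < _]mulrCA mulrA.
by rewrite divr_ge0 ?le_max ?lexx ?orbT // ltW.
Qed.

Lemma cut_time_le1 r c y : 1 <= c -> y <= r -> cut_time r c y <= 1.
Proof.
move=> c_ge1 y_le_r; rewrite /cut_time; have [y_le0|y_gt0] := leP y 0.
  by rewrite mul0r expr0n ler01.
have cr_gt0 : 0 < c * r by apply: mulr_gt0; lra.
apply: exprn_ile1; first by rewrite divr_ge0 // ltW.
by rewrite ler_pdivrMr // mul1r; nra.
Qed.

Lemma inv_sqr_eps_bounds (e : R) : 0 < e <= 1/320 ->
  let A := ((1 + e) ^+ 2)^-1 in let B := ((1 - e) ^+ 2)^-1 in
  [/\ 31/32 <= A, A <= B & B - A <= 1/64].
Proof.
move=> /andP[e_gt0 e_le] A B.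
have A_def : A * (1 + e) ^+ 2 = 1 by rewrite mulVf // sqrf_eq0; lra.
have B_def : B * (1 - e) ^+ 2 = 1 by rewrite mulVf // sqrf_eq0; lra.
have A_gt0 : 0 < A by rewrite invr_gt0 exprn_gt0 //; lra.
have B_gt0 : 0 < B by rewrite invr_gt0 exprn_gt0 //; lra.
have A_le1 : A <= 1 by nra.
have B_le : B <= 5/4 by nra.
have BA : B - A = 4 * e * A * B.
  apply: (mulIf (_ : (1 + e) ^+ 2 * (1 - e) ^+ 2 != 0)).
    by rewrite mulf_neq0 // sqrf_eq0; lra.
  have -> : 4 * e * A * B * ((1 + e) ^+ 2 * (1 - e) ^+ 2)
          = 4 * e * ((A * (1 + e) ^+ 2) * (B * (1 - e) ^+ 2)) by ring.
  rewrite A_def B_def mulrBl mulrCA B_def mulr1 mulrA A_def mul1r; ring.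
by split; nra.
Qed.

Lemma cut_window_pair_ge (r e al be : R) : al <= be -> 0 < e <= 1/320 -> 0 < r ->
  ((31/64) * (be - al) ^+ 2 - (1/64) * (al ^+ 2 + be ^+ 2)) / r ^+ 2
  <= (cut_time r (1 + e) be - cut_time r (1 - e) al)
     + (cut_time r (1 + e) (- al) - cut_time r (1 - e) (- be)).
Proof.
move=> le_ab e_bnd r_gt0; have [A_ge AB BA] := inv_sqr_eps_bounds e_bnd.
move: A_ge AB BA; set A := ((1 + e) ^+ 2)^-1; set B := ((1 - e) ^+ 2)^-1 => A_ge AB BA.
case/andP: e_bnd => e_gt0 e_le.
have EA y : cut_time r (1 + e) y = A * Num.max y 0 ^+ 2 / r ^+ 2.
  by rewrite /cut_time /A; field; apply/andP; split; apply/eqP; lra.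
have EB y : cut_time r (1 - e) y = B * Num.max y 0 ^+ 2 / r ^+ 2.
  by rewrite /cut_time /B; field; apply/andP; split; apply/eqP; lra.
rewrite !EA !EB -!mulrBl -mulrDl; apply: ler_wpM2r; first by rewrite invr_ge0 sqr_ge0.
have [al_ge0|al_lt0] := leP 0 al.
- rewrite (max_idPl (le_trans al_ge0 le_ab)).
  rewrite (max_idPr (_ : - al <= 0)) ?(max_idPr (_ : - be <= 0)) ?expr0n /=; try lra.
  have : 0 <= (be - al) * al by nra.
  have : 0 <= (A - 31/32) * (be ^+ 2 - al ^+ 2) by apply: mulr_ge0; nra.
  have : 0 <= (1/64 - (B - A)) * al ^+ 2 by apply: mulr_ge0; [lra | exact: sqr_ge0].
  nra.
have [be_ge0|be_lt0] := leP 0 be.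
- rewrite (max_idPl (_ : 0 <= - al)) ?(max_idPr (_ : - be <= 0)) ?expr0n /=; try lra.
  have : 0 <= (A - 31/32) * (be ^+ 2 + al ^+ 2) by apply: mulr_ge0; nra.
  have := sqr_ge0 (be + al); rewrite sqrrN; nra.
- rewrite (max_idPl (_ : 0 <= - al)) ?(max_idPl (_ : 0 <= - be)) ?expr0n /= ?sqrrN; try lra.
  have : 0 <= (be - al) * (- be) by nra.
  have : 0 <= (A - 31/32) * (al ^+ 2 - be ^+ 2) by apply: mulr_ge0; nra.
  have : 0 <= (1/64 - (B - A)) * be ^+ 2 by apply: mulr_ge0; [lra | exact: sqr_ge0].
  nra.
Qed.

End CutTimes.

Section Cuts.
Variables (R : realType) (d : nat) (med : seq (Rpoint R d) -> Rpoint R d) (eps : R).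
Local Notation point := (Rpoint R d).
Local Notation coord := (@Defs.coord R d).
Local Notation rad C := (cradius C (med C)).

Lemma split_centers_separates x C i th s c1 c2 :
  0 <= eps -> c1 \in C -> c2 \in C -> (1 < size C)%N ->
  coord c1 i < coord (med C) i + (sgn R s - eps) * Num.sqrt th * rad C ->
  coord (med C) i + (sgn R s + eps) * Num.sqrt th * rad C < coord c2 i ->
  ~~ ((c1 \in split_centers med eps x (i, th, s) C) &&
      (c2 \in split_centers med eps x (i, th, s) C)).
Proof.
move=> eps_ge0 c1C c2C size_C c1_lt lt_c2.
have gap : 0 <= eps * Num.sqrt th * rad C.
  by rewrite !mulr_ge0 ?sqrtr_ge0 ?cradius_ge0.
have shift : (sgn R s + eps) * Num.sqrt th * rad C
    = (sgn R s - eps) * Num.sqrt th * rad C + 2 * (eps * Num.sqrt th * rad C) by ring.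
rewrite shift in lt_c2.
rewrite /split_centers size_C.
set Left := [seq c <- C | _ <= _]; set Right := [seq c <- C | _ <= _].
have c1L : c1 \in Left by rewrite mem_filter c1C andbT; lra.
have c1R : c1 \notin Right by rewrite mem_filter c1C andbT -ltNge.
have c2R : c2 \in Right by rewrite mem_filter c2C andbT; lra.
have c2L : c2 \notin Left by rewrite mem_filter c2C andbT -ltNge; lra.
have -> : (Left != [::]) && (Right != [::]).
  by apply/andP; split; apply/eqP => E; [rewrite E in c1L | rewrite E in c2R].
by case: ifP => _; [rewrite (negbTE c2L) andbF | rewrite (negbTE c1R)].
Qed.

(* The sign sigma is folded into the offsets, so that one window formula serves
   both cut directions. *)
Definition cut_offset C i s (c : point) : R := sgn R s * (coord c i - coord (med C) i).

Definition window_lo C i s a b : R :=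
  cut_time (rad C) (1 - eps) (Num.min (cut_offset C i s a) (cut_offset C i s b)).

Definition window_hi C i s a b : R :=
  cut_time (rad C) (1 + eps) (Num.max (cut_offset C i s a) (cut_offset C i s b)).

Definition window_len C i s a b : R := Num.max (window_hi C i s a b - window_lo C i s a b) 0.

Lemma cut_offset_le_cradius C i s c : c \in C -> cut_offset C i s c <= rad C.
Proof.
move=> cC; have := sqr_coord_le (c - med C) i; rewrite coordB -sqr_enorm.
have := le_cradius (med C) cC; have := enorm_ge0 (c - med C).
by rewrite /cut_offset /sgn; case: s; nra.
Qed.

Lemma window_hi_le1 C i s a b : 0 <= eps -> a \in C -> b \in C -> window_hi C i s a b <= 1.
Proof.
move=> eps_ge0 aC bC; apply: cut_time_le1; first lra.
by rewrite ge_max !cut_offset_le_cradius.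
Qed.

Lemma window_separates x C i th s a b : 0 <= eps < 1 -> a \in C -> b \in C -> a != b ->
  window_lo C i s a b < th < window_hi C i s a b ->
  ~~ ((a \in split_centers med eps x (i, th, s) C) &&
      (b \in split_centers med eps x (i, th, s) C)).
Proof.
move=> /andP[eps_ge0 eps_lt1] aC bC neq_ab /andP[lo_th th_hi].
have size_C := mem2_size_gt1 aC bC neq_ab.
have th_gt0 : 0 < th by apply: le_lt_trans lo_th; exact: cut_time_ge0.
have r_gt0 : 0 < rad C.
  rewrite lt_neqAle cradius_ge0 andbT; apply: contraTneq th_hi => r0.
  by rewrite /window_hi /cut_time -r0 mulr0 invr0 mulr0 expr0n -leNgt ltW.
have lo : Num.min (cut_offset C i s a) (cut_offset C i s b) < (1 - eps) * Num.sqrt th * rad C.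
  move: lo_th; rewrite /window_lo cut_time_lt ?mulr_gt0 ?subr_gt0 ?ltW //.
  by apply: le_lt_trans; rewrite le_max lexx.
have hi : (1 + eps) * Num.sqrt th * rad C < Num.max (cut_offset C i s a) (cut_offset C i s b).
  move: th_hi; rewrite /window_hi lt_cut_time ?mulr_gt0 ?ltW //; last lra.
  rewrite lt_max [_ < 0]ltNge !mulr_ge0 ?sqrtr_ge0 ?cradius_ge0 ?orbF //; lra.
have separated c1 c2 : c1 \in C -> c2 \in C ->
    cut_offset C i s c1 < (1 - eps) * Num.sqrt th * rad C ->
    (1 + eps) * Num.sqrt th * rad C < cut_offset C i s c2 ->
    ~~ ((c1 \in split_centers med eps x (i, th, s) C) &&
        (c2 \in split_centers med eps x (i, th, s) C)).
  rewrite /cut_offset; case: s {lo hi lo_th th_hi} => c1C c2C; rewrite /sgn => lt_c1 lt_c2.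
    by apply: split_centers_separates => //; rewrite /sgn; lra.
  rewrite andbC; apply: split_centers_separates => //; rewrite /sgn.
    have -> : (-1 - eps) * Num.sqrt th * rad C = - ((1 + eps) * Num.sqrt th * rad C) by ring.
    lra.
  have -> : (-1 + eps) * Num.sqrt th * rad C = - ((1 - eps) * Num.sqrt th * rad C) by ring.
  lra.
have [le_ab|lt_ba] := leP (cut_offset C i s a) (cut_offset C i s b).
  by move: lo hi; rewrite (min_idPl le_ab) (max_idPr le_ab); exact: separated.
move: lo hi; rewrite (min_idPr (ltW lt_ba)) (max_idPl (ltW lt_ba)) andbC.
exact: separated.
Qed.

Lemma window_len_sum_ge C a b D : 0 < eps <= 1/320 -> is_median C (med C) ->
  a \in C -> b \in C -> cdiam C <= D -> D / 2 <= enorm (a - b) -> 0 < D ->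
  1/40 <= \sum_(i < d) \sum_(s : bool) window_len C i s a b.
Proof.
move=> eps_bnd medC aC bC diam_le far_ab D_gt0; set m := med C.
have ab_sq : D ^+ 2 / 4 <= sqnorm (a - b).
  by rewrite -sqr_enorm; have := enorm_ge0 (a - b); nra.
have am_sq : sqnorm (a - m) <= rad C ^+ 2.
  by rewrite -sqr_enorm; have := enorm_ge0 (a - m); have := le_cradius m aC; nra.
have bm_sq : sqnorm (b - m) <= rad C ^+ 2.
  by rewrite -sqr_enorm; have := enorm_ge0 (b - m); have := le_cradius m bC; nra.
have r_sq : rad C ^+ 2 <= 2 * D ^+ 2.
  by have := cradius_median_sqr medC; have := cdiam_ge0 C; nra.
have r_gt0 : 0 < rad C.
  rewrite lt_neqAle cradius_ge0 andbT; apply/negP => /eqP r0.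
  by move: am_sq bm_sq; rewrite -r0 expr0n /=; have := sqnorm_triangle a b m; nra.
have per_coord i : ((31/64) * (coord a i - coord b i) ^+ 2
      - (1/64) * ((coord a i - coord m i) ^+ 2 + (coord b i - coord m i) ^+ 2)) / rad C ^+ 2
    <= \sum_(s : bool) window_len C i s a b.
  rewrite big_bool /=; set u := coord a i - coord m i; set v := coord b i - coord m i.
  have [diff_sq sum_sq] : (Num.max u v - Num.min u v) ^+ 2 = (coord a i - coord b i) ^+ 2
      /\ Num.min u v ^+ 2 + Num.max u v ^+ 2 = u ^+ 2 + v ^+ 2.
    by rewrite /u /v; case: leP => _; split; ring.
  have := cut_window_pair_ge (_ : Num.min u v <= Num.max u v) eps_bnd r_gt0.
  rewrite diff_sq sum_sq ge_min !le_max lexx /= => /(_ isT) /le_trans; apply.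
  rewrite /window_len /window_hi /window_lo /cut_offset /sgn -/m -/u -/v !mul1r !mulN1r.
  by rewrite -oppr_max -oppr_min; apply: lerD; rewrite le_max lexx.
(* (31/64) D^2/4 - (1/64) 2 R^2 >= (15/512) R^2 >= R^2 / 40, as R^2 <= 2 D^2. *)
apply: le_trans (ler_sum _ (fun i _ => per_coord i)).
rewrite -mulr_suml sumrB -!mulr_sumr big_split /= -!sqnormB ler_pdivlMr ?exprn_gt0 //.
have := sqr_ge0 (rad C); lra.
Qed.

End Cuts.

Section NonnegIntegral.
Local Open Scope ereal_scope.
Context d (T : measurableType d) (R : realType) (mu : {measure set T -> \bar R}).

(* The integrands [prob_after] need not be measurable in theta. *)
Lemma ge0_le_integral_nomeas (D : set T) (f g : T -> \bar R) :
  (forall x, D x -> 0 <= f x) -> (forall x, D x -> f x <= g x) ->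
  \int[mu]_(x in D) f x <= \int[mu]_(x in D) g x.
Proof.
move=> f_ge0 le_fg.
have g_ge0 x : D x -> 0 <= g x by move=> Dx; exact: le_trans (f_ge0 _ Dx) (le_fg _ Dx).
rewrite (ge0_integralE mu f_ge0) (ge0_integralE mu g_ge0).
apply: ereal_sup_le => _ [h hf <-]; exists h => //= x.
apply: le_trans (hf x) _; rewrite /patch; case: ifP => // /[!inE]; exact: le_fg.
Qed.

End NonnegIntegral.

Section UnitIntervalIntegral.
Variable R : realType.
Local Notation lam := (@lebesgue_measure R).

Lemma lebesgue_measure_itv_oo (l u : R) :
  (lam `]l, u[%classic = (Num.max (u - l) 0)%:E)%E.
Proof.
rewrite lebesgue_measure_itv /= lte_fin; case: ltP => [lt_lu|le_ul].
  by rewrite -EFinB (max_idPl _) // subr_ge0 ltW.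
by rewrite (max_idPr _) // subr_le0.
Qed.

Lemma integral_itv01_indicC (c l u : R) : 0 <= c -> 0 <= l -> u <= 1 ->
  (\int[lam]_(th in `]0%R, 1%R[) (c * (1 - \1_(`]l, u[%classic : set R) th))%:E
   = (c * (1 - Num.max (u - l) 0))%:E)%E.
Proof.
move=> c_ge0 l_ge0 u_le1; set I := `]l, u[%classic.
have mI : measurable I by exact: measurable_itv.
have m01 : measurable (`]0%R, 1%R[%classic : set R) by exact: measurable_itv.
have int_c : (\int[lam]_(th in `]0%R, 1%R[) c%:E = c%:E)%E.
  have l01 : (lam `]0%R, 1%R[%classic = 1)%E.
    by rewrite lebesgue_measure_itv_oo subr0 (max_idPl ler01).
  by rewrite (integral_cst lam m01 c%:E) -[RHS]mule1; congr (_ * _)%E; exact: l01.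
have int_I : (\int[lam]_(th in `]0%R, 1%R[) (c * \1_I th)%:E = (c * Num.max (u - l) 0)%:E)%E.
  rewrite (@integralZl_indic _ _ _ lam _ m01 (fun _ => I) c) //=; last first.
    by move=> /lt_geF; rewrite c_ge0.
  rewrite integral_indic // EFinM -lebesgue_measure_itv_oo; congr (_ * lam _)%E.
  apply/seteqP; split => [y [] //|y Iy]; split => //.
  move: Iy; rewrite /I /= !in_itv /= => /andP[ly yu].
  by apply/andP; split; [apply: le_lt_trans ly | apply: lt_le_trans u_le1].
have term_ge0 th : (0 <= (c * (1 - \1_I th))%:E)%E.
  by rewrite lee_fin mulr_ge0 // indicE subr_ge0; case: (th \in _).
have split_c : (\int[lam]_(th in `]0%R, 1%R[)
    ((c * (1 - \1_I th))%:E + (c * \1_I th)%:E) = c%:E)%E.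
  by rewrite -int_c; apply: eq_integral => th _; rewrite -EFinD; congr EFin; ring.
rewrite ge0_integralD // in split_c; first last.
- by apply/measurable_EFinP; apply: measurable_funM => //; exact: measurable_indic.
- by move=> th _; rewrite lee_fin mulr_ge0 // indicE; case: (th \in _).
- apply/measurable_EFinP; apply: measurable_funM => //.
  by apply: measurable_funB => //; exact: measurable_indic.
rewrite int_I in split_c.
have := congr1 (fun z => (z - (c * Num.max (u - l) 0)%:E)%E) split_c.
by rewrite addeK // => ->; rewrite -EFinB; congr EFin; ring.
Qed.

End UnitIntervalIntegral.

Lemma prob_after_ge0 (R : realType) (d : nat) med (eps : R) n E (T : tree R d) :
  (0 <= prob_after med eps n E T)%E.
Proof.
elim: n T => [|n IH] T /=; first by case: (E T).
rewrite mule_ge0 ?lee_fin ?invr_ge0 ?mulr_ge0 ?ler0n //.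
by do 2!(apply: sume_ge0 => ? _); apply: integral_ge0 => th _; exact: IH.
Qed.

Section FarPairs.
Variables (R : realType) (d : nat) (med : seq (Rpoint R d) -> Rpoint R d) (eps : R).
Variables (x : Rpoint R d) (Ct : seq (Rpoint R d)) (D : R).
Hypotheses (d_gt0 : (0 < d)%N) (eps_bnd : 0 < eps <= 1/320)
  (med_ok : forall S, S != [::] -> is_median S (med S))
  (diam_le : cdiam Ct <= D) (D_gt0 : 0 < D).
Local Notation point := (Rpoint R d).
Local Notation lam := (@lebesgue_measure R).

Definition far_weight (C : seq point) a b : R :=
  ((D / 2 <= enorm (a - b)) && (a \in C) && (b \in C))%:R.

Definition far_pairs (C : seq point) : R := \sum_(a <- Ct) \sum_(b <- Ct) far_weight C a b.

Definition window_set C i s a b : set R :=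
  `]window_lo med eps C i s a b, window_hi med eps C i s a b[%classic.

(* A far pair is separated by one step with probability at least (1/40)/(2d). *)
Definition decay_rate : R := 1 - (80 * d%:R)^-1.

Lemma far_weight_ge0 C a b : 0 <= far_weight C a b.
Proof. exact: ler0n. Qed.

Lemma far_pairs_ge0 C : 0 <= far_pairs C.
Proof. by do 2!(apply: sumr_ge0 => ? _); exact: far_weight_ge0. Qed.

Lemma decay_rate_ge0 : 0 <= decay_rate.
Proof.
rewrite subr_ge0 invf_le1 ?mulr_gt0 ?ltr0n //.
have : 1 <= d%:R :> R by rewrite ler1n.
lra.
Qed.

Lemma far_pairs_ge1 C : {subset C <= Ct} -> D / 2 <= cdiam C -> 1 <= far_pairs C.
Proof.
have D2_gt0 : 0 < D / 2 by rewrite divr_gt0.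
move=> sub_C /(cdiam_geP D2_gt0) [a [b [aC bC far_ab]]].
have w_ab : far_weight C a b = 1 by rewrite /far_weight far_ab aC bC.
rewrite -w_ab /far_pairs (big_rem a (sub_C _ aC)) (big_rem b (sub_C _ bC)) /= -addrA lerDl.
by rewrite addr_ge0 //; do ?(apply: sumr_ge0 => ? _); exact: far_weight_ge0.
Qed.

Lemma far_pairs_split_le C i th s :
  far_pairs (split_centers med eps x (i, th, s) C)
  <= \sum_(a <- Ct) \sum_(b <- Ct) far_weight C a b * (1 - \1_(window_set C i s a b) th).
Proof.
apply: ler_sum => a _; apply: ler_sum => b _.
have sub := @split_centers_subset _ _ med eps x (i, th, s) C.
rewrite /far_weight indicE; case: (boolP (th \in _)) => [th_W|_]; last first.
  rewrite subr0 mulr1 ler_nat; case: (D / 2 <= _) => //=.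
  case: (boolP (a \in _)) => [/sub -> /=|//].
  by case: (boolP (b \in _)) => [/sub ->|].
rewrite subrr mulr0; case: (boolP (D / 2 <= enorm (a - b))) => //= far_ab.
case: (boolP (_ && _)) => // /[dup] /andP[/sub aC /sub bC] split_ab.
have neq_ab : a != b.
  by apply: contraTneq far_ab => ->; rewrite subrr enorm0 -ltNge divr_gt0.
have eps01 : 0 <= eps < 1 by case/andP: eps_bnd => *; apply/andP; split; lra.
have th_in : window_lo med eps C i s a b < th < window_hi med eps C i s a b.
  by move: th_W => /set_mem; rewrite /window_set /= in_itv.
by have := window_separates x eps01 aC bC neq_ab th_in; rewrite split_ab.
Qed.

Lemma integral_far_pairs_window c C i s : 0 <= c ->
  (\int[lam]_(th in `]0%R, 1%R[)
     (c * \sum_(a <- Ct) \sum_(b <- Ct) far_weight C a b * (1 - \1_(window_set C i s a b) th))%:E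
   = (c * \sum_(a <- Ct) \sum_(b <- Ct)
        far_weight C a b * (1 - window_len med eps C i s a b))%:E)%E.
Proof.
move=> c_ge0; have m01 : measurable (`]0%R, 1%R[%classic : set R) by exact: measurable_itv.
have term_ge0 (a b : point) th : (0 <= ((c * far_weight C a b) * (1 - \1_(window_set C i s a b) th))%:E)%E.
  by rewrite lee_fin !mulr_ge0 ?far_weight_ge0 // indicE subr_ge0; case: (th \in _).
have term_meas (a b : point) : measurable_fun (`]0%R, 1%R[%classic : set R)
    (fun th => ((c * far_weight C a b) * (1 - \1_(window_set C i s a b) th))%:E).
  apply/measurable_EFinP; apply: measurable_funM => //.
  by apply: measurable_funB => //; apply: measurable_indic; exact: measurable_itv.
under eq_integral => th _.
  rewrite mulr_sumr -sumEFin; under eq_bigr => a _ do rewrite mulr_sumr -sumEFin.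
  under eq_bigr => a _ do under eq_bigr => b _ do rewrite mulrA.
  over.
rewrite ge0_integral_sum //; last first.
- by move=> a th _; apply: sume_ge0 => b _.
- by move=> a; apply: emeasurable_sum => b; exact: term_meas.
rewrite mulr_sumr -sumEFin; apply: eq_bigr => a _.
rewrite ge0_integral_sum //; last exact: term_meas.
rewrite mulr_sumr -sumEFin; apply: eq_bigr => b _.
rewrite /far_weight; case: (boolP (_ && _)) => [/andP[/andP[_ aC] bC]|_]; last first.
  by under eq_integral do rewrite mulr0 mul0r; rewrite integral0 mul0r mulr0.
rewrite mulr1 mul1r integral_itv01_indicC ?cut_time_ge0 ?window_hi_le1 //.
by case/andP: eps_bnd => *; lra.
Qed.

Lemma window_sum_far_pair C a b : {subset C <= Ct} ->
  \sum_(i < d) \sum_(s : bool) far_weight C a b * (1 - window_len med eps C i s a b)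
  <= far_weight C a b * (2 * d%:R * decay_rate).
Proof.
move=> sub_C; rewrite /far_weight.
case: (boolP (_ && _)) => [/andP[/andP[far_ab aC] bC]|_]; last first.
  by rewrite mul0r big1 // => i _; rewrite big1 // => s _; rewrite mul0r.
have C_ne : C != [::] by apply: contraTneq aC => ->.
have mass := window_len_sum_ge eps_bnd (med_ok C_ne) aC bC
  (le_trans (cdiam_subset sub_C) diam_le) far_ab D_gt0.
under eq_bigr => i _ do under eq_bigr => s _ do rewrite mul1r.
under eq_bigr => i _ do rewrite sumrB big_bool /=.
rewrite mul1r sumrB sumr_const card_ord -[(1 + 1) *+ d]mulr_natr /decay_rate.
have d_pos : 0 < d%:R :> R by rewrite ltr0n.
have -> : 2 * d%:R * (1 - (80 * d%:R)^-1) = 2 * d%:R - 1/40 :> R.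
  by field; rewrite gt_eqF.
lra.
Qed.

Lemma mean_split_far_pairs C : {subset C <= Ct} ->
  (2 * d%:R)^-1 * \sum_(i < d) \sum_(s : bool) \sum_(a <- Ct) \sum_(b <- Ct)
      far_weight C a b * (1 - window_len med eps C i s a b)
  <= decay_rate * far_pairs C.
Proof.
move=> sub_C; have d_pos : 0 < d%:R :> R by rewrite ltr0n.
under eq_bigr => i _ do rewrite exchange_big.
rewrite exchange_big.
under eq_bigr => a _ do under eq_bigr => i _ do rewrite exchange_big.
under eq_bigr => a _ do rewrite exchange_big.
have sum_le : \sum_(a <- Ct) \sum_(b <- Ct) \sum_(i < d) \sum_(s : bool)
      far_weight C a b * (1 - window_len med eps C i s a b)
    <= 2 * d%:R * decay_rate * far_pairs C.
  rewrite /far_pairs mulr_sumr; apply: ler_sum => a _; rewrite mulr_sumr.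
  by apply: ler_sum => b _; rewrite mulrC; exact: window_sum_far_pair.
apply: le_trans (ler_wpM2l _ sum_le) _; first by rewrite invr_ge0 mulr_ge0.
by rewrite le_eqVlt; apply/orP; left; apply/eqP; field; rewrite gt_eqF.
Qed.

Lemma far_pairs_le_sqr_size C : far_pairs C <= (size Ct ^ 2)%:R.
Proof.
apply: le_trans (_ : \sum_(a <- Ct) \sum_(b <- Ct) (1 : R) <= _).
  by do 2!(apply: ler_sum => ? _); rewrite /far_weight lern1 leq_b1.
by rewrite !big_const_seq !count_predT !iter_addr_0 -mulrnA expnS expn1.
Qed.

Lemma prob_far_leaf_le n T : {subset leaf_centers x T <= Ct} ->
  (prob_after med eps n (fun T => (D / 2 <= cdiam (leaf_centers x T))%R) T
   <= (far_pairs (leaf_centers x T) * decay_rate ^+ n)%:E)%E.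
Proof.
elim: n T => [|n IH] T sub_T /=.
  rewrite expr0 mulr1; case: ifP => [far_T|_]; rewrite lee_fin ?far_pairs_ge0 //.
  exact: far_pairs_ge1.
set C := leaf_centers x T.
have step i s : (\int[lam]_(th in `]0%R, 1%R[)
      prob_after med eps n (fun T => (D / 2 <= cdiam (leaf_centers x T))%R)
        (ds_step med eps (i, th, s) T)
    <= (decay_rate ^+ n * \sum_(a <- Ct) \sum_(b <- Ct)
          far_weight C a b * (1 - window_len med eps C i s a b))%:E)%E.
  rewrite -integral_far_pairs_window ?exprn_ge0 ?decay_rate_ge0 //.
  apply: ge0_le_integral_nomeas => th _; first exact: prob_after_ge0.
  have sub_step : {subset leaf_centers x (ds_step med eps (i, th, s) T) <= Ct}.
    by move=> c; rewrite leaf_centers_ds_step => /split_centers_subset /sub_T.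
  apply: le_trans (IH _ sub_step) _.
  rewrite lee_fin leaf_centers_ds_step mulrC ler_wpM2l ?exprn_ge0 ?decay_rate_ge0 //.
  exact: far_pairs_split_le.
apply: le_trans (lee_wpmul2l _ (lee_sum _ (fun i _ => lee_sum _ (fun s _ => step i s)))) _.
  by rewrite lee_fin invr_ge0 mulr_ge0 ?ler0n.
under eq_bigr => i _ do rewrite sumEFin -mulr_sumr.
rewrite sumEFin -mulr_sumr -EFinM lee_fin mulrCA.
apply: le_trans (ler_wpM2l (exprn_ge0 _ decay_rate_ge0) (mean_split_far_pairs sub_T)) _.
by rewrite exprSr le_eqVlt; apply/orP; left; apply/eqP; ring.
Qed.

End FarPairs.

Lemma geometric_decay_le (R : realType) (d k L : nat) (N : R) :
  (0 < d)%N -> (2 <= k)%N -> 0 <= N -> N <= (k ^ 2)%:R ->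
  640 * d%:R * ln (k%:R : R) <= L%:R ->
  N * (1 - (80 * d%:R)^-1) ^+ L <= ((k ^ 3)%:R)^-1.
Proof.
move=> d_gt0 k_ge2 N_ge0 N_le L_ge.
set K : R := k%:R; have K_ge2 : 2 <= K by rewrite /K ler_nat.
have d_pos : 0 < d%:R :> R by rewrite ltr0n.
set p : R := (80 * d%:R)^-1.
have p_gt0 : 0 < p by rewrite /p invr_gt0 mulr_gt0.
have p_le1 : p <= 1.
  rewrite /p invf_le1 ?mulr_gt0 //; have : 1 <= d%:R :> R by rewrite ler1n.
  lra.
(* (1 - p)^L <= exp (- p L) <= exp (- 8 ln K). *)
have decay : (1 - p) ^+ L <= (K ^+ 8)^-1.
  apply: le_trans (_ : expR (- p) ^+ L <= _).
    have q_ge0 : 0 <= 1 - p by lra.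
    apply: lerXn2r; rewrite ?nnegrE ?expR_ge0 //.
    by have := expR_ge1Dx (- p); rewrite addrC.
  rewrite -expRM_natr -[X in _ <= X]lnK ?posrE ?invr_gt0 ?exprn_gt0 ?ler_expR; try lra.
  rewrite lnV ?posrE ?exprn_gt0 ?lnXn; try lra.
  have lnK_gt0 : 0 < ln K by apply: ln_gt0; lra.
  have : p * (640 * d%:R * ln K) = 8%:R * ln K by rewrite /p; field; rewrite gt_eqF.
  have := ler_wpM2l (ltW p_gt0) L_ge; rewrite -/K; nra.
rewrite !natrX -/K in N_le *.
have K8_gt0 : 0 < K ^+ 8 by rewrite exprn_gt0 //; lra.
apply: le_trans (_ : K ^+ 2 * (K ^+ 8)^-1 <= _).
  by apply: le_trans (ler_wpM2l N_ge0 decay) _; apply: ler_wpM2r => //; rewrite invr_ge0 ltW.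
have -> : K ^+ 2 * (K ^+ 8)^-1 = (K ^+ 3)^-1 * (K ^+ 3)^-1 by field; rewrite gt_eqF //; lra.
have K3_ge1 : 1 <= K ^+ 3 by rewrite exprn_ege1 //; lra.
rewrite -[X in _ <= X]mulr1; apply: ler_wpM2l; first by rewrite invr_ge0; lra.
by rewrite invf_le1 //; lra.
Qed.

Theorem lemma4 (R : realType) (d : nat) (C : seq (Rpoint R d))
  (delta : R) (med : seq (Rpoint R d) -> Rpoint R d) (x : Rpoint R d)
  (h : seq (ds_draw R d)) :
  (0 < d)%N -> uniq C -> (0 < delta < 1) ->
  (forall S, S != [::] -> is_median S (med S)) ->
  all (fun w : ds_draw R d => 0 < w.1.2 < 1) h ->
  let k := size C in
  let eps := Num.min (delta / (15 * ln k%:R)) (320%:R)^-1 in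
  let L := `|Num.ceil (640 * d%:R * ln (k%:R : R))|%N in
  let Dt := cdiam (leaf_centers x (tree_after med eps C h)) in
  0 < Dt ->
  (prob_after med eps L
     (fun T => (Dt / 2 <= cdiam (leaf_centers x T))%R) (tree_after med eps C h)
   <= ((k ^ 3)%:R^-1)%:E)%E.
Proof.
move=> d_gt0 _ /andP[delta_gt0 _] med_ok _ k eps L Dt Dt_gt0.
set T0 := tree_after med eps C h; set Ct := leaf_centers x T0.
have Ct_C : subseq Ct C by exact: leaf_centers_tree_after.
have [a [b [aCt bCt far_ab]]] := cdiam_geP Dt_gt0 (lexx Dt).
have neq_ab : a != b.
  by apply: contraTneq far_ab => ->; rewrite subrr enorm0 -ltNge.
have k_ge2 : (2 <= k)%N := leq_trans (mem2_size_gt1 aCt bCt neq_ab) (size_subseq Ct_C).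
have lnk_gt0 : 0 < ln (k%:R : R) by rewrite ln_gt0 // ltr1n.
have eps_bnd : 0 < eps <= 1/320.
  by rewrite /eps lt_min ge_min divr_gt0 ?mulr_gt0 ?invr_gt0 ?ltr0n // mul1r lexx orbT.
have L_ge : 640 * d%:R * ln (k%:R : R) <= L%:R.
  have prod_ge0 : 0 <= 640 * d%:R * ln (k%:R : R) by rewrite !mulr_ge0 ?ler0n ?ltW.
  by rewrite natr_absz ger0_norm ?ceil_ge // ceil_ge0 (lt_le_trans (ltrN10 R) prod_ge0).
apply: le_trans (prob_far_leaf_le d_gt0 eps_bnd med_ok (lexx _) Dt_gt0 L (fun c c_in => c_in)) _.
rewrite lee_fin /decay_rate; apply: geometric_decay_le => //; first exact: far_pairs_ge0.
apply: le_trans (far_pairs_le_sqr_size _ _ _) _.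
by rewrite ler_nat leq_exp2r // size_subseq.
Qed.
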